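(* Let $f\in C^1(\mathbb{R})$ with $f(0)=0$, $m>0$, $\omega\in(0,m)$, and let $(v,u)$ be real-valued, exponentially decaying solutions of $\omega v=\partial_x u+[m-f(v^2-u^2)]v$, $\omega u=-\partial_x v-[m-f(v^2-u^2)]u$ on $\mathbb{R}$. Let $$\mathcal{A}_\omega=\begin{pmatrix}0&L_-(\omega)\\-L_+(\omega)&0\end{pmatrix},\quad L_-(\omega)=\begin{pmatrix}m-f(\tau)-\omega&\partial_x\\-\partial_x&-m+f(\tau)-\omega\end{pmatrix},\quad L_+(\omega)=L_-(\omega)-2f'(\tau)\begin{pmatrix}v^2&-vu\\-vu&u^2\end{pmatrix},$$ with $\tau=v^2-u^2$, acting on $L^2(\mathbb{R},\mathbb{C}^4)$. Then $\pm2\omega i$ are eigenvalues of $\mathcal{A}_\omega$ (with eigenfunctions in $H^1(\mathbb{R},\mathbb{C}^4)$), for any such nonlinearity $f$.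
   Context: $\mathcal{A}_\omega$ is the linearization of the 1D Soler model $i\partial_t\psi_1=\partial_x\psi_2+(m-f(|\psi_1|^2-|\psi_2|^2))\psi_1$, $i\partial_t\psi_2=-\partial_x\psi_1-(m-f(|\psi_1|^2-|\psi_2|^2))\psi_2$ at the solitary wave $(v,u)^Te^{-i\omega t}$, written for $R=(\mathrm{Re}\rho,\mathrm{Im}\rho)\in\mathbb{R}^4$ where $\psi=((v,u)^T+\rho)e^{-i\omega t}$, and complexified. *)

From Stdlib Require Import Reals Lra.
Open Scope R_scope.

Definition tau (v u : R -> R) (x : R) : R := v x ^ 2 - u x ^ 2.

Definition C1_with_deriv (f df : R -> R) : Prop :=
  (forall x, derivable_pt_lim f x (df x)) /\ continuity df.

Definition soler_profile (m w : R) (f v u dv du : R -> R) : Prop :=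
  (forall x, derivable_pt_lim v x (dv x)) /\
  (forall x, derivable_pt_lim u x (du x)) /\
  (forall x, w * v x = du x + (m - f (tau v u x)) * v x) /\
  (forall x, w * u x = - dv x - (m - f (tau v u x)) * u x).

Definition exp_decaying (v u : R -> R) : Prop :=
  exists C k, 0 < k /\ forall x, Rabs (v x) + Rabs (u x) <= C * exp (- k * Rabs x).

(* square integrability on R (improper Riemann sense): locally Riemann
   integrable square, with uniformly bounded integrals over compact intervals *)
Definition L2 (g : R -> R) : Prop :=
  (forall a b, exists pr : Riemann_integrable (fun x => g x ^ 2) a b, True) /\
  (exists M, forall a b (pr : Riemann_integrable (fun x => g x ^ 2) a b),
      a <= b -> RiemannInt pr <= M).

(* Pointwise action of A_w on R^4-valued functions R = (X1,X2,Y1,Y2),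
   X = Re rho, Y = Im rho:  A (X,Y) = (L_- Y, - L_+ X).
   g j = j-th component at x, dg j = its derivative at x. *)
Definition Aomega (m w : R) (f df v u : R -> R) (x : R) (g dg : nat -> R)
  (k : nat) : R :=
  let t := tau v u x in
  match k with
  | 0%nat => (m - f t - w) * g 2%nat + dg 3%nat
  | 1%nat => - dg 2%nat + (- m + f t - w) * g 3%nat
  | 2%nat => - ((m - f t - w) * g 0%nat + dg 1%nat
                - 2 * df t * (v x ^ 2 * g 0%nat - v x * u x * g 1%nat))
  | 3%nat => - (- dg 0%nat + (- m + f t - w) * g 1%nat
                - 2 * df t * (- v x * u x * g 0%nat + u x ^ 2 * g 1%nat))
  | _ => 0
  end.

(* i*mu is an eigenvalue of the complexified A_w, with an eigenfunction
   Psi = P + i Q in H^1(R, C^4):  A P = - mu Q,  A Q = mu P, Psi <> 0. *)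
Definition has_imag_eigenvalue_H1 (m w : R) (f df v u : R -> R) (mu : R) : Prop :=
  exists P Q dP dQ : nat -> R -> R,
    (forall k x, (k < 4)%nat ->
       derivable_pt_lim (P k) x (dP k x) /\ derivable_pt_lim (Q k) x (dQ k x)) /\
    (forall k, (k < 4)%nat -> L2 (P k) /\ L2 (dP k) /\ L2 (Q k) /\ L2 (dQ k)) /\
    (exists k x, (k < 4)%nat /\ (P k x <> 0 \/ Q k x <> 0)) /\
    (forall k x, (k < 4)%nat ->
       Aomega m w f df v u x (fun j => P j x) (fun j => dP j x) k = - mu * Q k x /\
       Aomega m w f df v u x (fun j => Q j x) (fun j => dQ j x) k = mu * P k x).

(* Since (u, v) lies in the kernel of the rank-one matrix
   [[v^2, -vu], [-vu, u^2]] = (v, -u)(v, -u)^T, the operators L_+ and L_-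
   agree on it, and the profile equations say exactly L_-(u, v) = -2w (u, v).
   Hence Phi = (u, v, 0, 0) and Psi = (0, 0, u, v) satisfy
   A Phi = 2w Psi and A Psi = -2w Phi, so 2w Phi - i mu Psi is an eigenvector
   of A for i mu whenever mu^2 = 4w^2.  It lies in H^1 because u and v decay
   exponentially, and so do u' and v', being f(tau)-bounded multiples of
   v and u by the profile equations. *)
From Stdlib Require Import Reals Lra Lia Psatz.
From Coquelicot Require Import Coquelicot.
Open Scope R_scope.

Definition exp_localized (g : R -> R) : Prop :=
  continuity g /\
  exists K k, 0 < k /\ forall x, Rabs (g x) <= K * exp (- k * Rabs x).

Lemma derivable_pt_lim_continuity_pt (g : R -> R) (x l : R) :
  derivable_pt_lim g x l -> continuity_pt g x.
Proof. intros hg; exact (derivable_continuous_pt g x (exist _ l hg)). Qed.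

Lemma continuity_sqr (g : R -> R) : continuity g -> continuity (fun x => g x ^ 2).
Proof.
  intros hg x; apply continuity_pt_ext with (fun y => g y * g y).
  - intros y; ring.
  - exact (continuity_pt_mult g g x (hg x) (hg x)).
Qed.

Lemma exp_neg_abs_sq_le (k x : R) :
  0 <= k -> exp (- k * Rabs x) ^ 2 * (1 + (k * x) ^ 2) <= 1.
Proof.
  intros hk.
  set (a := k * Rabs x).
  assert (ha : 0 <= a) by (apply Rmult_le_pos; [lra | apply Rabs_pos]).
  assert (hkx : (k * x) ^ 2 = a ^ 2).
  { unfold a; rewrite !Rpow_mult_distr, pow2_abs; reflexivity. }
  replace (- k * Rabs x) with (- a) by (unfold a; ring).
  rewrite hkx, exp_Ropp.
  assert (hE := exp_ineq1_le a).
  assert (hEt : exp a * / exp a = 1) by (apply Rinv_r; apply Rgt_not_eq, exp_pos).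
  assert (ht : 0 < / exp a) by apply Rinv_0_lt_compat, exp_pos.
  set (E := exp a) in *; set (t := / E) in *.
  assert (hE2 : 1 + a ^ 2 <= E ^ 2) by nra.
  replace 1 with ((E * t) ^ 2) at 2 by (rewrite hEt; ring).
  assert (0 <= t ^ 2) by nra.
  nra.
Qed.

Lemma exp_localized_sqr_le (g : R -> R) :
  exp_localized g ->
  exists K k, 0 <= K /\ 0 < k /\ forall x, g x ^ 2 <= K / (1 + (k * x) ^ 2).
Proof.
  intros [_ [K [k [hk hb]]]].
  exists (K ^ 2), k; split; [nra | split; [exact hk |]].
  intros x.
  assert (hden : 0 < 1 + (k * x) ^ 2) by nra.
  assert (hexp := exp_neg_abs_sq_le k x (Rlt_le _ _ hk)).
  assert (hep := exp_pos (- k * Rabs x)).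
  assert (hg : Rabs (g x) <= Rabs K * exp (- k * Rabs x)).
  { eapply Rle_trans; [apply hb |].
    apply Rmult_le_compat_r; [lra | apply Rle_abs]. }
  assert (hg0 := Rabs_pos (g x)).
  assert (hsq : g x ^ 2 <= K ^ 2 * exp (- k * Rabs x) ^ 2).
  { rewrite <- (pow2_abs (g x)), <- (pow2_abs K); nra. }
  apply Rle_trans with (1 := hsq).
  apply (Rmult_le_reg_r (1 + (k * x) ^ 2)); [exact hden |].
  replace (K ^ 2 / (1 + (k * x) ^ 2) * (1 + (k * x) ^ 2)) with (K ^ 2) by (field; lra).
  assert (0 <= K ^ 2) by nra.
  nra.
Qed.

Lemma is_RInt_Cauchy_density (k a b : R) :
  0 < k -> is_RInt (fun x => / (1 + (k * x) ^ 2)) a b ((atan (k * b) - atan (k * a)) / k).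
Proof.
  intros hk.
  replace ((atan (k * b) - atan (k * a)) / k)
    with (minus (/ k * atan (k * b)) (/ k * atan (k * a)))
    by (unfold minus, plus, opp; simpl; field; lra).
  apply (is_RInt_derive (fun x => / k * atan (k * x))).
  - intros x _.
    evar (d : R).
    replace (/ (1 + (k * x) ^ 2)) with d.
    + apply (is_derive_scal (fun x => atan (k * x))).
      apply (is_derive_comp atan (fun y => k * y)).
      * apply is_derive_atan.
      * apply is_derive_scal, is_derive_id.
    + unfold d, scal, one; simpl; unfold mult; simpl; rewrite Rsqr_pow2; field; repeat split; nra.
  - intros x _.
    apply (ex_derive_continuous (fun x => / (1 + (k * x) ^ 2))).
    auto_derive; nra.
Qed.

Lemma L2_of_exp_localized (g : R -> R) : exp_localized g -> L2 g.
Proof.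
  intros hg.
  assert (hcont : forall x, continuous (fun y => g y ^ 2) x).
  { intros x; apply continuity_pt_filterlim, continuity_sqr, hg. }
  assert (hex : forall a b, ex_RInt (fun y => g y ^ 2) a b).
  { intros a b; apply (ex_RInt_continuous (V := R_CompleteNormedModule)); auto. }
  destruct (exp_localized_sqr_le g hg) as [K [k [hK [hk hsq]]]].
  split.
  - intros a b; exists (ex_RInt_Reals_0 _ _ _ (hex a b)); exact I.
  - exists (K / k * PI); intros a b pr hab.
    rewrite <- RInt_Reals.
    assert (hI := is_RInt_scal _ a b K _ (is_RInt_Cauchy_density k a b hk)).
    assert (hR : RInt (fun x => K * / (1 + (k * x) ^ 2)) a b
                 = K / k * (atan (k * b) - atan (k * a))).
    { replace (K / k * (atan (k * b) - atan (k * a)))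
        with (scal K ((atan (k * b) - atan (k * a)) / k))
        by (unfold scal; simpl; unfold mult; simpl; field; lra).
      apply is_RInt_unique; exact hI. }
    apply Rle_trans with (RInt (fun x => K * / (1 + (k * x) ^ 2)) a b).
    + apply RInt_le; [exact hab | apply hex | eexists; exact hI |].
      intros x _; apply hsq.
    + rewrite hR.
      assert (h1 := atan_bound (k * b)); assert (h2 := atan_bound (k * a)).
      assert (0 <= K / k) by (apply Rdiv_le_0_compat; lra).
      nra.
Qed.

Lemma exp_localized_ext (g h : R -> R) :
  (forall x, g x = h x) -> exp_localized g -> exp_localized h.
Proof.
  intros hgh [hg [K [k [hk hb]]]]; split.
  - intros x; apply (continuity_pt_ext g h x hgh (hg x)).
  - exists K, k; split; [exact hk |]; intros x; rewrite <- hgh; apply hb.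
Qed.

Lemma exp_localized_zero : exp_localized (fun _ => 0).
Proof.
  split; [intros x; apply continuity_pt_const; intros ? ?; reflexivity |].
  exists 0, 1; split; [lra | intros x; rewrite Rabs_R0; lra].
Qed.

Lemma exp_localized_scal (c : R) (g : R -> R) :
  exp_localized g -> exp_localized (fun x => c * g x).
Proof.
  intros [hc [K [k [hk hb]]]]; split.
  - intros x; apply (continuity_pt_scal g c x (hc x)).
  - exists (Rabs c * K), k; split; [exact hk |]; intros x.
    rewrite Rabs_mult, Rmult_assoc.
    apply Rmult_le_compat_l; [apply Rabs_pos | apply hb].
Qed.

Lemma exp_localized_bounded (g : R -> R) :
  exp_localized g -> exists B, forall x, Rabs (g x) <= B.
Proof.
  intros [_ [K [k [hk hb]]]]; exists (Rabs K); intros x.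
  assert (he : exp (- k * Rabs x) <= 1).
  { assert (hle : - k * Rabs x <= 0) by (assert (0 <= Rabs x) by apply Rabs_pos; nra).
    rewrite <- exp_0; destruct (Rle_lt_or_eq_dec _ _ hle) as [hlt | ->].
    - left; apply exp_increasing, hlt.
    - right; reflexivity. }
  assert (hp := exp_pos (- k * Rabs x)).
  assert (hK := Rle_abs K); assert (hK0 := Rabs_pos K).
  specialize (hb x); nra.
Qed.

Lemma exp_localized_mul_bounded (h g : R -> R) (B : R) :
  continuity h -> (forall x, Rabs (h x) <= B) ->
  exp_localized g -> exp_localized (fun x => h x * g x).
Proof.
  intros hh hB [hg [K [k [hk hb]]]]; split.
  - intros x; apply (continuity_pt_mult h g x (hh x) (hg x)).
  - exists (B * K), k; split; [exact hk |]; intros x.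
    rewrite Rabs_mult, Rmult_assoc.
    apply Rmult_le_compat; [apply Rabs_pos | apply Rabs_pos | apply hB | apply hb].
Qed.

Lemma continuity_comp_bounded (F t : R -> R) (c : R) :
  continuity F -> (forall x, Rabs (t x) <= c) ->
  exists B, forall x, Rabs (F (t x)) <= B.
Proof.
  intros hF ht.
  assert (hc : - c <= c) by (specialize (ht 0); assert (0 <= Rabs (t 0)) by apply Rabs_pos; lra).
  destruct (continuity_ab_maj (fun y => Rabs (F y)) (- c) c hc) as [y [hmax _]].
  { intros y _; apply (continuity_pt_comp F Rabs); [apply hF | apply Rcontinuity_abs]. }
  exists (Rabs (F y)); intros x; apply hmax.
  specialize (ht x); split_Rabs; lra.
Qed.

Lemma exp_decaying_localized (v u : R -> R) :
  continuity v -> continuity u -> exp_decaying v u ->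
  exp_localized v /\ exp_localized u.
Proof.
  intros hv hu [C [k [hk hb]]]; split; split; try assumption; exists C, k;
    split; try exact hk; intros x; specialize (hb x);
    assert (0 <= Rabs (v x)) by apply Rabs_pos;
    assert (0 <= Rabs (u x)) by apply Rabs_pos; lra.
Qed.

Lemma soler_profile_localized (m w : R) (f df v u dv du : R -> R) :
  C1_with_deriv f df -> soler_profile m w f v u dv du -> exp_decaying v u ->
  exp_localized v /\ exp_localized u /\ exp_localized dv /\ exp_localized du.
Proof.
  intros [hf _] [hv [hu [hdu hdv]]] hdec.
  assert (cv : continuity v) by (intros x; exact (derivable_pt_lim_continuity_pt v x _ (hv x))).
  assert (cu : continuity u) by (intros x; exact (derivable_pt_lim_continuity_pt u x _ (hu x))).
  assert (cf : continuity f) by (intros x; exact (derivable_pt_lim_continuity_pt f x _ (hf x))).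
  destruct (exp_decaying_localized v u cv cu hdec) as [lv lu].
  destruct (exp_localized_bounded v lv) as [Bv hBv].
  destruct (exp_localized_bounded u lu) as [Bu hBu].
  assert (ctau : continuity (tau v u)).
  { intros x; apply (continuity_pt_minus (fun y => v y ^ 2) (fun y => u y ^ 2));
      apply continuity_sqr; assumption. }
  assert (htau : forall x, Rabs (tau v u x) <= Bv ^ 2 + Bu ^ 2).
  { intros x; unfold tau; specialize (hBv x); specialize (hBu x).
    rewrite <- (pow2_abs (v x)), <- (pow2_abs (u x)).
    assert (0 <= Rabs (v x)) by apply Rabs_pos; assert (0 <= Rabs (u x)) by apply Rabs_pos.
    apply Rabs_le; split; nra. }
  destruct (continuity_comp_bounded f (tau v u) _ cf htau) as [B hB].
  assert (hcoef : forall c g, exp_localized g ->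
            exp_localized (fun x => (c + f (tau v u x)) * g x)).
  { intros c g hg; apply exp_localized_mul_bounded with (Rabs c + B); [| | exact hg].
    - intros x; apply (continuity_pt_plus (fun _ => c) (fun y => f (tau v u y)));
        [apply continuity_pt_const; intros ? ?; reflexivity |].
      apply (continuity_pt_comp (tau v u) f); [apply ctau | apply cf].
    - intros x; eapply Rle_trans; [apply Rabs_triang | specialize (hB x); lra]. }
  split; [exact lv | split; [exact lu | split]].
  - apply exp_localized_ext with (fun x => (- w - m + f (tau v u x)) * u x);
      [intros x; specialize (hdv x); lra | apply hcoef, lu].
  - apply exp_localized_ext with (fun x => (w - m + f (tau v u x)) * v x);
      [intros x; specialize (hdu x); lra | apply hcoef, lv].
Qed.

Definition re_slot (a b : R -> R) (j : nat) (x : R) : R :=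
  match j with 0%nat => a x | 1%nat => b x | _ => 0 end.

Definition im_slot (a b : R -> R) (j : nat) (x : R) : R :=
  match j with 2%nat => a x | 3%nat => b x | _ => 0 end.

Lemma derivable_pt_lim_re_slot (a b da db : R -> R) (j : nat) (x : R) :
  derivable_pt_lim a x (da x) -> derivable_pt_lim b x (db x) ->
  derivable_pt_lim (re_slot a b j) x (re_slot da db j x).
Proof.
  intros ha hb; destruct j as [|[|j]]; [exact ha | exact hb | apply derivable_pt_lim_const].
Qed.

Lemma derivable_pt_lim_im_slot (a b da db : R -> R) (j : nat) (x : R) :
  derivable_pt_lim a x (da x) -> derivable_pt_lim b x (db x) ->
  derivable_pt_lim (im_slot a b j) x (im_slot da db j x).
Proof.
  intros ha hb; destruct j as [|[|[|[|j]]]];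
    solve [exact ha | exact hb | apply derivable_pt_lim_const].
Qed.

Lemma exp_localized_re_slot (a b : R -> R) (j : nat) :
  exp_localized a -> exp_localized b -> exp_localized (re_slot a b j).
Proof.
  intros ha hb; destruct j as [|[|j]]; [exact ha | exact hb | apply exp_localized_zero].
Qed.

Lemma exp_localized_im_slot (a b : R -> R) (j : nat) :
  exp_localized a -> exp_localized b -> exp_localized (im_slot a b j).
Proof.
  intros ha hb; destruct j as [|[|[|[|j]]]];
    solve [exact ha | exact hb | apply exp_localized_zero].
Qed.

Lemma Aomega_scal (m w : R) (f df v u : R -> R) (x c : R) (g dg : nat -> R) (k : nat) :
  Aomega m w f df v u x (fun j => c * g j) (fun j => c * dg j) k
  = c * Aomega m w f df v u x g dg k.
Proof. destruct k as [|[|[|[|k]]]]; unfold Aomega; simpl; ring. Qed.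

Section ProfileAtPoint.

Variables (m w : R) (f df v u dv du : R -> R) (x : R).
Hypothesis profile_v : w * v x = du x + (m - f (tau v u x)) * v x.
Hypothesis profile_u : w * u x = - dv x - (m - f (tau v u x)) * u x.

Lemma Aomega_re_slot_profile (k : nat) :
  Aomega m w f df v u x (fun j => re_slot u v j x) (fun j => re_slot du dv j x) k
  = 2 * w * im_slot u v k x.
Proof. destruct k as [|[|[|[|k]]]]; unfold Aomega; simpl; lra. Qed.

Lemma Aomega_im_slot_profile (k : nat) :
  Aomega m w f df v u x (fun j => im_slot u v j x) (fun j => im_slot du dv j x) k
  = - (2 * w) * re_slot u v k x.
Proof. destruct k as [|[|[|[|k]]]]; unfold Aomega; simpl; lra. Qed.

End ProfileAtPoint.

Lemma has_imag_eigenvalue_H1_of_sqr (m w mu : R) (f df v u dv du : R -> R) :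
  C1_with_deriv f df -> 0 < w ->
  soler_profile m w f v u dv du -> exp_decaying v u ->
  (exists x, v x <> 0 \/ u x <> 0) ->
  mu ^ 2 = (2 * w) ^ 2 ->
  has_imag_eigenvalue_H1 m w f df v u mu.
Proof.
  intros hf hw hprof hdec [x0 hx0] hmu.
  destruct (soler_profile_localized m w f df v u dv du hf hprof hdec)
    as [lv [lu [ldv ldu]]].
  destruct hprof as [hv [hu [hdu hdv]]].
  exists (fun j x => 2 * w * re_slot u v j x), (fun j x => - mu * im_slot u v j x),
         (fun j x => 2 * w * re_slot du dv j x), (fun j x => - mu * im_slot du dv j x).
  split; [| split; [| split]].
  - intros k x _; split; apply derivable_pt_lim_scal;
      [apply derivable_pt_lim_re_slot | apply derivable_pt_lim_im_slot]; auto.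
  - intros k _; refine (conj _ (conj _ (conj _ _)));
      apply L2_of_exp_localized, exp_localized_scal;
      solve [apply exp_localized_re_slot; assumption
            | apply exp_localized_im_slot; assumption].
  - destruct hx0 as [hv0 | hu0]; [exists 1%nat, x0 | exists 0%nat, x0];
      (split; [lia | left; simpl]); apply Rmult_integral_contrapositive; split; lra.
  - intros k x _; rewrite !Aomega_scal, Aomega_re_slot_profile, Aomega_im_slot_profile
      by auto; split.
    + replace (- mu * (- mu * im_slot u v k x)) with (mu ^ 2 * im_slot u v k x) by ring.
      rewrite hmu; ring.
    + ring.
Qed.

Theorem mainTheorem5 (f df : R -> R) (m w : R) (v u dv du : R -> R) :
  C1_with_deriv f df -> f 0 = 0 ->
  0 < m -> 0 < w -> w < m ->
  soler_profile m w f v u dv du ->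
  exp_decaying v u ->
  (exists x, v x <> 0 \/ u x <> 0) ->
  has_imag_eigenvalue_H1 m w f df v u (2 * w) /\
  has_imag_eigenvalue_H1 m w f df v u (- (2 * w)).
Proof.
  intros hf _ _ hw _ hprof hdec hnz.
  split; apply (has_imag_eigenvalue_H1_of_sqr m w _ f df v u dv du); auto; ring.
Qed.
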